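(* Let $G$ be a finite perfect group (i.e. $G=[G,G]$) and let $I$ be any set. Then the unrestricted direct product $G^I$, viewed as a discrete group, is strongly bounded.
   Context: A group $\Gamma$ is called strongly bounded if for every action of $\Gamma$ by isometries on a metric space, every orbit is bounded. *)

From mathcomp Require Import all_boot all_fingroup.
From Stdlib Require Import Reals.

Set Implicit Arguments.
Unset Strict Implicit.
Unset Printing Implicit Defensive.

Definition perfect_group (gT : finGroupType) : Prop :=
  ([~: [set: gT], [set: gT]] = [set: gT])%g.

Definition is_metric (X : Type) (d : X -> X -> R) : Prop :=
  (forall x y, d x y = 0%R <-> x = y) /\
  (forall x y, d x y = d y x) /\
  (forall x y z, (d x z <= d x y + d y z)%R).

Definition isometric_action (T X : Type) (mul : T -> T -> T) (one : T)
    (d : X -> X -> R) (act : T -> X -> X) : Prop :=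
  (forall x, act one x = x) /\
  (forall g h x, act (mul g h) x = act g (act h x)) /\
  (forall g x y, d (act g x) (act g y) = d x y).

Definition strongly_bounded (T : Type) (mul : T -> T -> T) (one : T) : Prop :=
  forall (X : Type) (d : X -> X -> R) (act : T -> X -> X),
    is_metric d -> isometric_action mul one d act ->
    forall x : X, exists M : R, forall g h : T, (d (act g x) (act h x) <= M)%R.

Definition prod_mul (I : Type) (gT : finGroupType) (f g : I -> gT) : I -> gT :=
  fun i => (f i * g i)%g.
Definition prod_one (I : Type) (gT : finGroupType) : I -> gT := fun _ => 1%g.

From mathcomp Require Import all_boot all_fingroup.
From Stdlib Require Import Reals Lra ClassicalEpsilon FunctionalExtensionality.

Set Implicit Arguments.
Unset Strict Implicit.
Unset Printing Implicit Defensive.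

(* A point x of an isometric G^I-space gives the length function
   f |-> d (f x, x), which vanishes at 1, is subadditive and invariant under
   inversion; it suffices to show that such a length function is bounded.
   Call A a bounded subset of I if the length is bounded on functions
   supported in A; bounded sets form an ideal.
   As G is perfect, every x in G is a product of commutators [a_t(x), b_t]
   with constants b_t.  Applied pointwise, this writes functions F_k supported
   on pairwise disjoint sets X_k as products of commutators [a_t o F, b_t on X_k]
   with one glued function F.  Only the factors b_t on X_k depend on k, so the
   F_k cannot all be chosen longer than k plus the length of those factors:
   some X_k is bounded.  Hence, if I were unbounded, there would be an
   unbounded atomic set Y (for every A, one of Y /\ A and Y \ A is bounded),
   since otherwise repeated splitting gives disjoint unbounded sets.  On Y, functions of bounded support have
   uniformly bounded length, since otherwise one could extract such functions
   of length > k with disjoint supports, and atomicity bounds either the even-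
   or the odd-indexed ones.  Finally, some value class of f supported on Y is
   unbounded, hence co-bounded in Y, so f is a constant on Y times a function
   of bounded support, and Y is bounded after all. *)

Lemma perfect_commutator_word (gT : finGroupType) : perfect_group gT ->
  exists s : seq (gT * gT * gT),
    forall x : gT, x = (\prod_(t <- s | t.1.1 == x) [~ t.1.2, t.2])%g.
Proof.
move=> perfG.
have /choice [w wE] : forall x : gT,
    exists w : seq (gT * gT), x = (\prod_(p <- w) [~ p.1, p.2])%g.
  move=> x; have : x \in [~: [set: gT], [set: gT]]%g by rewrite perfG inE.
  case/gen_prodgP=> n [c cP ->].
  have /choice [p pE] : forall i, exists p : gT * gT, c i = [~ p.1, p.2]%g.
    by move=> i; case/imset2P: (cP i) => y z _ _ ->; exists (y, z).
  by exists [seq p i | i <- index_enum 'I_n]; rewrite big_map; apply: eq_bigr.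
exists [seq (y, p.1, p.2) | y <- index_enum gT, p <- w y] => x.
rewrite big_mkcond big_allpairs_dep /= (eq_bigr (fun y => if y == x then x else 1%g)).
  by rewrite -big_mkcond big_pred1_eq.
move=> y _; case: eqP => [-> | _]; first by rewrite {2}(wE x).
by rewrite big1.
Qed.

Definition pairwise_disjoint (T : Type) (X : nat -> T -> Prop) :=
  forall m n x, X m x -> X n x -> m = n.

Lemma disjoint_layers (T : Type) (D X : nat -> T -> Prop) :
  (forall n x, D n.+1 x -> D n x) ->
  (forall n x, X n x -> D n x /\ ~ D n.+1 x) -> pairwise_disjoint X.
Proof.
move=> decD XD.
have Dle m n x : (m <= n)%N -> D n x -> D m x.
  elim: n => [|n IH]; first by rewrite leqn0 => /eqP ->.
  by rewrite leq_eqVlt => /orP [/eqP -> //| ltmn] /decD; apply: IH.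
suff lt_false m n x : (m < n)%N -> X m x -> X n x -> False.
  move=> m n x Xm Xn; case: (ltngtP m n) => // ltmn; exfalso.
    exact: lt_false ltmn Xm Xn.
  exact: lt_false ltmn Xn Xm.
move=> ltmn /XD[_ nDm1] /XD[Dn _]; exact/nDm1/(Dle _ _ _ ltmn Dn).
Qed.

Lemma exists_INR_gt (r : R) : exists n : nat, (r < INR n)%R.
Proof. by have [n] := INR_archimed 1 r Rlt_0_1; exists n; lra. Qed.

Lemma fin_bounded (T : finType) (F : T -> R) : exists M, forall t, (F t <= M)%R.
Proof.
suff [M MF] : exists M, forall t, t \in enum T -> (F t <= M)%R.
  by exists M => t; apply: MF; rewrite mem_enum.
elim: (enum T) => [|t s [M MF]]; first by exists 0%R.
exists (Rmax (F t) M) => u; rewrite inE => /orP [/eqP -> | /MF].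
  exact: Rmax_l.
by move=> FuM; apply: Rle_trans FuM (Rmax_r _ _).
Qed.

Section LengthFunction.

Variables (gT : finGroupType) (I : Type) (len : (I -> gT) -> R).

Local Open Scope R_scope.

Hypothesis len1 : len (@prod_one I gT) = 0.
Hypothesis lenM : forall f g, len (prod_mul f g) <= len f + len g.
Hypothesis lenV : forall f, len (fun i => (f i)^-1)%g = len f.

Definition supp (f : I -> gT) : I -> Prop := fun i => f i <> 1%g.

Definition supported (A : I -> Prop) (f : I -> gT) := forall i, supp f i -> A i.

Definition bounded (A : I -> Prop) :=
  exists M, forall f, supported A f -> len f <= M.

Definition atomic (Y : I -> Prop) := forall A : I -> Prop,
  bounded (fun i => Y i /\ A i) \/ bounded (fun i => Y i /\ ~ A i).

Definition restrict (A : I -> Prop) (f : I -> gT) : I -> gT :=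
  fun i => if excluded_middle_informative (A i) then f i else 1%g.

Lemma supported_out A f i : supported A f -> ~ A i -> f i = 1%g.
Proof. by move=> suppf nAi; apply: NNPP => /suppf. Qed.

Lemma restrict_in A f i : A i -> restrict A f i = f i.
Proof. by rewrite /restrict; case: excluded_middle_informative. Qed.

Lemma restrict_out A f i : ~ A i -> restrict A f i = 1%g.
Proof. by rewrite /restrict; case: excluded_middle_informative. Qed.

Lemma supp_restrict A f i : supp (restrict A f) i -> A i /\ supp f i.
Proof. by rewrite /supp /restrict; case: excluded_middle_informative. Qed.

Lemma restrictC A f : f = prod_mul (restrict A f) (restrict (fun i => ~ A i) f).
Proof.
apply: functional_extensionality => i; rewrite /prod_mul.
case: (classic (A i)) => Ai; first by rewrite restrict_in // restrict_out ?mulg1.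
by rewrite restrict_out // restrict_in // mul1g.
Qed.

Lemma len_prod (T : Type) (s : seq T) (h : T -> I -> gT) (M : R) :
  (forall t, len (h t) <= M) ->
  len (fun i => \prod_(t <- s) h t i)%g <= INR (size s) * M.
Proof.
move=> hM; elim: s => [|t s IH].
  have -> : (fun i => \prod_(t <- [::]) h t i)%g = @prod_one I gT.
    by apply: functional_extensionality => i; rewrite big_nil.
  by rewrite len1 /=; lra.
have -> : (fun i => \prod_(u <- t :: s) h u i)%g
          = prod_mul (h t) (fun i => \prod_(u <- s) h u i)%g.
  by apply: functional_extensionality => i; rewrite big_cons.
rewrite [size _]/= S_INR; have := lenM (h t) (fun i => \prod_(u <- s) h u i)%g.
have := hM t; lra.
Qed.

Lemma len_commg f g : len (fun i => [~ f i, g i])%g <= 2 * len f + 2 * len g.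
Proof.
pose fV i := (f i)^-1%g; pose gV i := (g i)^-1%g.
have -> : (fun i => [~ f i, g i])%g = prod_mul fV (prod_mul (prod_mul gV f) g).
  by apply: functional_extensionality => i; rewrite /prod_mul commgEl conjgE !mulgA.
have := lenM fV (prod_mul (prod_mul gV f) g); have := lenM (prod_mul gV f) g.
have := lenM gV f; rewrite /fV /gV !lenV; lra.
Qed.

Lemma unbounded_large A M : ~ bounded A -> exists f, supported A f /\ M < len f.
Proof.
move=> unbA; apply: NNPP => nolarge; apply: unbA; exists M => f suppf.
by apply: Rnot_lt_le => ltMf; apply: nolarge; exists f.
Qed.

Lemma bounded_sub A B : (forall i, A i -> B i) -> bounded B -> bounded A.
Proof. by move=> AB [M BM]; exists M => f suppf; apply: BM => i /suppf /AB. Qed.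

Lemma bounded0 : bounded (fun _ => False).
Proof.
exists 0 => f suppf.
suff -> : f = @prod_one I gT by rewrite len1; lra.
by apply: functional_extensionality => i; apply: supported_out suppf _.
Qed.

Lemma boundedU A B : bounded A -> bounded B -> bounded (fun i => A i \/ B i).
Proof.
move=> [MA AM] [MB BM]; exists (MA + MB) => f suppf.
have fA_supp : supported A (restrict A f) by move=> i fi; case: (supp_restrict fi).
have fB_supp : supported B (restrict (fun i => ~ A i) f).
  by move=> i fi; case: (supp_restrict fi) => nAi /suppf[].
rewrite (restrictC A f); have := lenM (restrict A f) (restrict (fun i => ~ A i) f).
have := AM _ fA_supp; have := BM _ fB_supp; lra.
Qed.

Lemma bounded_fin_cover (T : finType) (A : T -> I -> Prop) :
  (forall t, bounded (A t)) -> bounded (fun i => exists t, A t i).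
Proof.
move=> bA; suff bs (s : seq T) : bounded (fun i => exists2 t, t \in s & A t i).
  by apply: (bounded_sub _ (bs (enum T))) => i [t Ati]; exists t; rewrite ?mem_enum.
elim: s => [|t s IH].
  by apply: (bounded_sub _ bounded0) => i [].
apply: (bounded_sub _ (boundedU (bA t) IH)) => i [u]; rewrite inE.
by case/orP => [/eqP -> | us] Aui; [left | right; exists u].
Qed.

Hypothesis perfectG : perfect_group gT.

Lemma disjoint_family_bounded (X : nat -> I -> Prop) :
  pairwise_disjoint X -> exists k, bounded (X k).
Proof.
move=> disjX; apply: NNPP => unbX.
have {}unbX k : ~ bounded (X k) by move=> bXk; apply: unbX; exists k.
have [s sE] := perfect_commutator_word perfectG.
pose c y k := restrict (X k) (fun _ => y).
have /choice [Mc McE] : forall k, exists M, forall y, len (c y k) <= M.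
  by move=> k; apply: fin_bounded.
pose large k f := INR (size s) * (2 * INR k + 2 * Mc k) < len f.
have /choice [F FE] : forall k, exists f, supported (X k) f /\ large k f.
  by move=> k; apply: unbounded_large.
(* [glue] agrees with every [F k] on [X k] and is arbitrary elsewhere, so only
   the constant commutator factors [c _ k] below depend on [k]. *)
pose glue i := F (epsilon (inhabits 0%nat) (fun k : nat => X k i)) i.
pose a (t : gT * gT * gT) i := if glue i == t.1.1 then t.1.2 else 1%g.
have [K KE] := fin_bounded (fun t => len (a t)).
have FkE k : F k = (fun i => \prod_(t <- s) [~ a t i, c t.2 k i])%g.
  apply: functional_extensionality => i; case: (classic (X k i)) => Xki.
    have glueE : glue i = F k i.
      have Xeps := epsilon_spec (inhabits 0%nat) (fun k : nat => X k i) (ex_intro _ k Xki).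
      by rewrite /glue (disjX _ _ _ Xeps Xki).
    rewrite {1}(sE (F k i)) big_mkcond; apply: eq_bigr => t _.
    by rewrite /a /c restrict_in // glueE eq_sym; case: eqP; rewrite ?comm1g.
  rewrite (supported_out (proj1 (FE k)) Xki) big1 // => t _.
  by rewrite /c restrict_out // commg1.
have [n Kn] := exists_INR_gt K.
have len_factor t : len (fun i => [~ a t i, c t.2 n i])%g <= 2 * K + 2 * Mc n.
  by have := len_commg (a t) (c t.2 n); have := KE t; have := McE n t.2; lra.
have scale : INR (size s) * (2 * K + 2 * Mc n)
              <= INR (size s) * (2 * INR n + 2 * Mc n).
  by apply: Rmult_le_compat_l; [exact: pos_INR | lra].
have := proj2 (FE n); rewrite /large FkE.
by apply/Rle_not_lt/(Rle_trans _ _ _ (len_prod s len_factor)).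
Qed.

Lemma unbounded_atomic Y : ~ bounded Y -> exists Z, atomic Z /\ ~ bounded Z.
Proof.
move=> unbY; apply: NNPP => noatom.
have /choice [phi phiE] : forall Z, exists A : I -> Prop, ~ bounded Z ->
    ~ bounded (fun i => Z i /\ A i) /\ ~ bounded (fun i => Z i /\ ~ A i).
  move=> Z; case: (classic (bounded Z)) => [bZ | unbZ].
    by exists (fun _ => True) => /(_ bZ).
  apply: NNPP => nosplit; apply: noatom; exists Z; split=> // A.
  apply: NNPP => nA; apply: nosplit; exists A => _.
  by split=> bA; apply: nA; [left | right].
pose Y_ n := iter n (fun Z i => Z i /\ ~ phi Z i) Y.
have unbY_ n : ~ bounded (Y_ n) by elim: n => //= n /phiE[].
pose X n i := Y_ n i /\ phi (Y_ n) i.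
have disjX : pairwise_disjoint X.
  apply: (disjoint_layers (D := Y_)) => n i /=; first by case.
  by move=> [Yi phii]; split=> // -[_].
have [k] := disjoint_family_bounded disjX.
exact: (proj1 (phiE _ (unbY_ k))).
Qed.

Lemma atomic_disjoint_supports Y (g : nat -> I -> gT) :
  atomic Y -> (forall k, supported Y (g k)) ->
  pairwise_disjoint (fun k => supp (g k)) -> ~ (forall k, INR k < len (g k)).
Proof.
move=> atY suppY disjg large.
pose E i := exists k, supp (g k.*2) i.
have le_double n : INR n <= INR n.*2 by apply/le_INR/leP; rewrite -addnn leq_addr.
case: (atY E) => -[M EM]; have [n Mn] := exists_INR_gt M.
- have := EM (g n.*2) (fun i gi => conj (suppY _ _ gi) (ex_intro _ n gi)).
  by have := large n.*2; have := le_double n; lra.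
- have suppE : supported (fun i => Y i /\ ~ E i) (g n.*2.+1).
    move=> i gi; split; first exact: suppY gi.
    by case=> k gk; move: (disjg _ _ _ gi gk) => /(congr1 odd) /=; rewrite !odd_double.
  have := EM _ suppE; have := large n.*2.+1; have := le_double n; rewrite S_INR; lra.
Qed.

Lemma disjoint_large_supports Y :
  (forall M, exists f, [/\ supported Y f, bounded (supp f) & M < len f]) ->
  exists g : nat -> I -> gT, [/\ forall k, supported Y (g k),
    pairwise_disjoint (fun k => supp (g k)) & forall k, INR k < len (g k)].
Proof.
move=> /choice [f fE].
have /choice [B BE] : forall U, exists M,
    bounded U -> forall h, supported U h -> len h <= M.
  move=> U; case: (classic (bounded U)) => [[M UM] | nbU]; first by exists M => _.
  by exists 0 => /nbU.
(* [U k] is the union of the supports of the [fk j], j < k; cutting it out of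
   [fk k] costs at most [B (U k)]. *)
pose U := nat_rect (fun _ => I -> Prop) (fun _ => False)
  (fun k Uk i => Uk i \/ supp (f (INR k + B Uk)) i).
pose fk k := f (INR k + B (U k)).
have bU k : bounded (U k).
  elim: k => [|k IH] /=; first exact: bounded0.
  by apply: boundedU IH _; have [] := fE (INR k + B (U k)).
pose g k := restrict (fun i => ~ U k i) (fk k).
exists g; split.
- move=> k i gki; case: (supp_restrict gki) => _ fki.
  by have [suppf _ _] := fE (INR k + B (U k)); apply: suppf.
- apply: (disjoint_layers (D := fun k i => ~ U k i)) => [k i nUk1 Uk | k i gki].
    by apply: nUk1; left.
  by case: (supp_restrict gki) => nUk fki; split=> // nUk1; apply: nUk1; right.
- move=> k; have [_ _ large] := fE (INR k + B (U k)).
  move: large; rewrite -/(fk k) {1}(restrictC (U k) (fk k)) -/(g k).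
  have := lenM (restrict (U k) (fk k)) (g k).
  have := BE _ (bU k) (restrict (U k) (fk k)) (fun i fi => proj1 (supp_restrict fi)).
  lra.
Qed.

Lemma atomic_uniform_bound Y : atomic Y ->
  exists M, forall f, supported Y f -> bounded (supp f) -> len f <= M.
Proof.
move=> atY; apply: NNPP => nounif.
have large M : exists f, [/\ supported Y f, bounded (supp f) & M < len f].
  apply: NNPP => nolarge; apply: nounif; exists M => f suppf bf.
  by apply: Rnot_lt_le => ltMf; apply: nolarge; exists f.
have [g [suppg disjg largeg]] := disjoint_large_supports large.
exact: atomic_disjoint_supports atY suppg disjg largeg.
Qed.

Lemma atomic_bounded Y : atomic Y -> bounded Y.
Proof.
move=> atY; case: (classic (bounded Y)) => // unbY.
have [S SE] := atomic_uniform_bound atY.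
pose e y := restrict Y (fun _ => y).
have [C CE] := fin_bounded (fun y => len (e y)).
exists (C + S) => f suppf.
have [y unb_y] : exists y, ~ bounded (fun i => Y i /\ f i = y).
  apply: NNPP => allb; apply: unbY.
  apply: (bounded_sub _ (bounded_fin_cover (A := fun y i => Y i /\ f i = y) _)).
    by move=> i Yi; exists (f i).
  by move=> y; apply: NNPP => nby; apply: allb; exists y.
have bnot_y : bounded (fun i => Y i /\ f i <> y) by case: (atY (fun i => f i = y)).
pose f' i := ((e y i)^-1 * f i)%g.
have supp_f' i : supp f' i -> Y i /\ f i <> y.
  rewrite /supp /f' /e; case: (classic (Y i)) => Yi.
    by rewrite restrict_in // => ne; split=> // fy; apply: ne; rewrite fy mulVg.
  by rewrite restrict_out // invg1 mul1g => /suppf.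
have -> : f = prod_mul (e y) f'.
  by apply: functional_extensionality => i; rewrite /prod_mul /f' mulKVg.
have := lenM (e y) f'; have := CE y.
have := SE f' (fun i fi => proj1 (supp_f' i fi)) (bounded_sub supp_f' bnot_y).
lra.
Qed.

Theorem length_function_bounded : exists M, forall f, len f <= M.
Proof.
have [M IM] : bounded (fun _ => True).
  apply: NNPP => unbI; have [Z [atZ unbZ]] := unbounded_atomic unbI.
  exact/unbZ/atomic_bounded.
by exists M => f; apply: IM.
Qed.

End LengthFunction.

Theorem mainTheorem1 (gT : finGroupType) (I : Type) :
  perfect_group gT -> strongly_bounded (@prod_mul I gT) (@prod_one I gT).
Proof.
move=> perfG X d act [d0 [dC dT]] [act1 [actM actd]] x.
pose len (f : I -> gT) := d (act f x) x.
have [M lenM] : exists M, forall f, (len f <= M)%R.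
  apply: (length_function_bounded (len := len)) => // [|f g|f]; rewrite /len.
  - by rewrite act1; apply/d0.
  - by rewrite actM; have := dT (act f (act g x)) (act f x) x; rewrite actd; lra.
  - have fVf : prod_mul f (fun i => (f i)^-1)%g = @prod_one I gT.
      by apply: functional_extensionality => i; rewrite /prod_mul mulgV.
    by rewrite -(actd f) -actM fVf act1 dC.
exists (2 * M)%R => g h; have := dT (act g x) x (act h x); rewrite (dC x).
by have := lenM g; have := lenM h; rewrite /len; lra.
Qed.
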